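(* Let $\tau_0,\tau_1,\tau_2>0$. For any $0<\alpha<\beta$, we have $\mathcal{B}_\alpha\subset\mathcal{B}_\beta$.
   Context: $\mathcal{C}=\{z\in\mathbb{C}:\Re z\ge(1+\tau_0)|\Im z|\}\cap\{z\in\mathbb{C}:\tau_1<\Re z<\tau_2\}$; for $a=(a_1,\dots,a_n)\in\mathbb{R}^n$, $p_a(z)=z^n+a_1z^{n-1}+\dots+a_n$; and for $\alpha>0$, $\mathcal{B}_\alpha=\{a\in\mathbb{R}^n:\ p_a(z)/z^n\in\mathcal{C}\text{ for all } z \text{ with } |z|=\alpha\}$. *)

From HB Require Import structures.
From mathcomp Require Import all_boot all_order all_algebra.
From mathcomp Require Import complex reals.
Set Implicit Arguments. Unset Strict Implicit. Unset Printing Implicit Defensive.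
Import Order.TTheory GRing.Theory Num.Theory.
Local Open Scope ring_scope.

(* Complex numbers: R[i] = complex R over the reals R : realType
   (Re, Im the real/imaginary parts, `|z| the modulus, a real element of R[i]). *)

Definition regionC (R : realType) (tau0 tau1 tau2 : R) (z : R[i]) : Prop :=
  (1 + tau0) * `|complex.Im z| <= complex.Re z /\ tau1 < complex.Re z /\ complex.Re z < tau2.

(* p_a(z) = z^n + a_1 z^(n-1) + ... + a_n, with a_{i+1} = a i for i : 'I_n. *)
Definition p_a (R : realType) (n : nat) (a : 'I_n -> R) (z : R[i]) : R[i] :=
  z ^+ n + \sum_(i < n) (a i)%:C%C * z ^+ (n - i.+1).

Definition B_alpha (R : realType) (tau0 tau1 tau2 : R) (n : nat) (alpha : R)
  : ('I_n -> R) -> Prop := fun a =>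
  forall z : R[i], `|z| = alpha%:C%C -> regionC tau0 tau1 tau2 (p_a a z / z ^+ n).

(* Since p_a(z)/z^n = q(1/z) for the reversed polynomial q = 1 + a_1 X + ... + a_n X^n,
   membership in B_alpha says that q maps the circle of radius 1/alpha into C.  C is cut
   out by four half-planes d <= Re (c w) (two of them strict), and Re (c q - d) is
   harmonic, so by the minimum principle q also maps the smaller circle of radius 1/beta
   into C.  The minimum principle for polynomials is obtained algebraically: averaging
   over the N roots of z^N = -1 gives discrete mean value, Cauchy and Poisson formulas,
   hence the Harnack-type bound
     Re H(t) - t^N Re H(1/t) >= (1 - t)/(1 + t) Re H(0)     (0 < t < 1, deg H < N),
   and letting N grow removes the error term t^N Re H(1/t). *)

From HB Require Import structures.
From mathcomp Require Import all_boot all_order all_algebra.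
From mathcomp Require Import cyclic separable cyclotomic.
From mathcomp Require Import complex reals.
From mathcomp Require Import zify.
From mathcomp.algebra_tactics Require Import ring lra.
Import Order.TTheory GRing.Theory Num.Theory.
Set Implicit Arguments. Unset Strict Implicit. Unset Printing Implicit Defensive.
Local Open Scope ring_scope.
Local Open Scope complex_scope.

Lemma prim_root_exists (F : closedFieldType) (m : nat) :
  (0 < m)%N -> m%:R != 0 :> F -> exists z : F, m.-primitive_root z.
Proof.
move=> m_gt0 m_neq0.
have [r Dp] := closed_field_poly_normal ('X^m - 1 : {poly F}).
rewrite (monicP _) ?monicXnsubC // scale1r in Dp.
have r_roots : all m.-unity_root r by apply/allP=> z; rewrite -root_prod_XsubC -Dp.
have size_r : (m < (size r).+1)%N by rewrite -(size_prod_XsubC r id) -Dp size_XnsubC.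
have [|z _ ?] := hasP (has_prim_root m_gt0 r_roots _ size_r); last by exists z.
by rewrite -separable_prod_XsubC -Dp separable_Xn_sub_1.
Qed.

Lemma prim_root_half (R : idomainType) (N : nat) (eta : R) :
  (0 < N)%N -> (2 * N).-primitive_root eta -> eta ^+ N = -1.
Proof.
move=> N_gt0 eta_prim.
have : (eta ^+ N) ^+ 2 = 1 by rewrite -exprM mulnC (prim_expr_order eta_prim).
move/eqP; rewrite sqrf_eq1 -[X in _ == X](expr0 eta) (eq_prim_root_expr eta_prim).
rewrite mod0n modn_small; last by lia.
by rewrite eqn0Ngt N_gt0 => /eqP.
Qed.

Lemma norm_prim_root (R : numDomainType) (n : nat) (z : R) :
  (0 < n)%N -> n.-primitive_root z -> `|z| = 1.
Proof.
move=> n_gt0 z_prim; apply/eqP.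
by rewrite -(pexpr_eq1 n_gt0) ?normr_ge0 // -normrX (prim_expr_order z_prim) normr1.
Qed.

(* The xi k, k < N, are the N roots of z^N = -1; unlike the N-th roots of unity they
   keep both denominators 1 + t^N and 1 + t^-N of the Cauchy formula positive. *)
Section OddRoots.
Variables (F : fieldType) (N : nat) (eta : F).
Hypotheses (N_gt0 : (0 < N)%N) (eta_prim : (2 * N).-primitive_root eta).
Local Notation xi k := (eta ^+ (2 * k).+1).

Lemma odd_root_exprN (k : nat) : xi k ^+ N = -1.
Proof.
by rewrite exprAC (prim_root_half N_gt0 eta_prim) -signr_odd oddS oddM.
Qed.

Lemma sum_odd_root_expr (e : nat) :
  \sum_(k < N) xi k ^+ e = if (N %| e)%N then N%:R * eta ^+ e else 0.
Proof.
have -> : \sum_(k < N) xi k ^+ e = eta ^+ e * \sum_(k < N) (eta ^+ (2 * e)) ^+ k.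
  by rewrite mulr_sumr; apply: eq_bigr => k _; rewrite -!exprM -exprD; congr (_ ^+ _); lia.
have unity : (eta ^+ (2 * e) == 1) = (N %| e)%N.
  rewrite -[X in _ == X](expr0 eta) (eq_prim_root_expr eta_prim) mod0n.
  by rewrite -/(dvdn _ _) dvdn_pmul2l.
case: ifP => [/idP|] N_dvd; rewrite -unity in N_dvd.
  by rewrite (eqP N_dvd); under eq_bigr do rewrite expr1n; rewrite sumr_const card_ord mulrC.
have : (eta ^+ (2 * e) - 1) * \sum_(k < N) (eta ^+ (2 * e)) ^+ k = 0.
  by rewrite -subrX1 -exprM mulnAC exprM (prim_expr_order eta_prim) expr1n subrr.
by move/eqP; rewrite mulf_eq0 subr_eq0 N_dvd => /eqP ->; rewrite mulr0.
Qed.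

Lemma sum_odd_root_horner (H : {poly F}) :
  (size H <= N)%N -> \sum_(k < N) H.[xi k] = N%:R * H`_0.
Proof.
move=> size_H; under eq_bigr do rewrite (horner_coef_wide _ size_H).
rewrite exchange_big /=; under eq_bigr do rewrite -mulr_sumr sum_odd_root_expr.
rewrite (bigD1 (Ordinal N_gt0)) //= big1 => [|j /eqP j_neq0].
  by rewrite dvdn0 expr0 mulr1 addr0 mulrC.
have j_gt0 : (0 < j)%N by rewrite lt0n; apply/eqP => j0; apply/j_neq0/val_inj.
case: ifP => [/(dvdn_leq j_gt0)|]; last by rewrite mulr0.
by have := ltn_ord j; lia.
Qed.

Lemma odd_root_subr_neq0 (x : F) (k : nat) : 1 + x ^+ N != 0 -> xi k - x != 0.
Proof. by apply: contraNneq => /eqP; rewrite subr_eq0 => /eqP <-; rewrite odd_root_exprN addrN. Qed.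

Lemma sum_odd_root_inv (x : F) : 1 + x ^+ N != 0 ->
  \sum_(k < N) (xi k - x)^-1 = - (N%:R * x ^+ N.-1) / (1 + x ^+ N).
Proof.
move=> x_ok; pose D : {poly F} := \poly_(i < N) x ^+ (N.-1 - i).
have invE k : (xi k - x)^-1 = - D.[xi k] / (1 + x ^+ N).
  have DE : (x - xi k) * D.[xi k] = 1 + x ^+ N.
    by rewrite horner_poly -subrXX odd_root_exprN opprK addrC.
  apply: (mulfI (odd_root_subr_neq0 k x_ok)); rewrite mulfV ?odd_root_subr_neq0 //.
  by rewrite mulrA mulrN -mulNr opprB DE divff.
under eq_bigr do rewrite invE.
rewrite -mulr_suml sumrN sum_odd_root_horner.
  by rewrite coef_poly N_gt0 subn0.
exact: size_poly.
Qed.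

Lemma sum_odd_root_cauchy (H : {poly F}) (x : F) :
  (size H <= N)%N -> x != 0 -> 1 + x ^+ N != 0 ->
  \sum_(k < N) xi k * H.[xi k] / (xi k - x) = N%:R * H.[x] / (1 + x ^+ N).
Proof.
move=> size_H x_neq0 x_ok.
(* (X H(X) - x H(x)) / (X - x) is a polynomial D of size <= N with D(0) = H(x). *)
have [D DE] : exists D : {poly F}, 'X * H - (x * H.[x])%:P = D * ('X - x%:P).
  by apply/factor_theorem; rewrite /root !hornerE subrr.
have size_D : (size D <= N)%N.
  have [->|D_neq0] := eqVneq D 0; first by rewrite size_poly0.
  have : (size (D * ('X - x%:P))%R <= (size H).+1)%N.
    by rewrite -DE -polyCN mulrC size_MXaddC; case: ifP.
  by rewrite size_Mmonic ?monicXsubC // size_XsubC addn2 ltnS => /leq_trans; apply.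
have D0 : D`_0 = H.[x].
  have := congr1 (horner^~ 0) DE; rewrite !hornerE horner_coef0 mulrN mulrC.
  by move/oppr_inj/(mulIf x_neq0).
have DxiE k : xi k * H.[xi k] / (xi k - x) = D.[xi k] + x * H.[x] / (xi k - x).
  have := congr1 (horner^~ (xi k)) DE; rewrite !hornerE => /(canRL (subrK _)) ->.
  by rewrite mulrDl mulfK ?odd_root_subr_neq0.
under eq_bigr do rewrite DxiE.
rewrite big_split /= sum_odd_root_horner // -mulr_sumr sum_odd_root_inv // D0.
have xN : x ^+ N = x * x ^+ N.-1 by rewrite -exprS prednK.
by rewrite xN in x_ok *; field.
Qed.
End OddRoots.

Lemma poisson_den_gt0 (R : realFieldType) (r t : R) :
  `|r| <= 1 -> 0 < t -> t != 1 -> 0 < 1 - 2 * t * r + t ^+ 2.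
Proof.
rewrite ler_norml => /andP[_ r_le1] t_gt0 t_neq1.
have : 0 < (1 - t) ^+ 2 by rewrite lt_def sqrf_eq0 subr_eq0 eq_sym t_neq1 sqr_ge0.
have : 0 <= t * (1 - r) by rewrite mulr_ge0 ?subr_ge0 // ltW.
lra.
Qed.

Lemma poisson_ratio_ge (R : realFieldType) (r t : R) : `|r| <= 1 -> 0 < t < 1 ->
  (1 - t) / (1 + t) <= (1 - t ^+ 2) / (1 - 2 * t * r + t ^+ 2).
Proof.
move=> r_le1 /andP[t_gt0 t_lt1].
have den_gt0 := poisson_den_gt0 r_le1 t_gt0 (negbT (lt_eqF t_lt1)).
rewrite ler_pdivlMr // mulrAC ler_pdivrMr; last by lra.
move: r_le1; rewrite ler_norml => /andP[r_ge _].
have : 0 <= t * (1 - t) * (1 + r) by rewrite !mulr_ge0 //; lra.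
lra.
Qed.

Lemma natr_mul_expr_le1 (R : realDomainType) (t : R) (n : nat) :
  0 <= t <= 1 -> n%:R * (1 - t) * t ^+ n <= 1.
Proof.
move=> /andP[t_ge0 t_le1]; elim: n => [|n IHn]; first by rewrite mul0r mul0r ler01.
have tn1_le1 : t ^+ n.+1 <= 1 by rewrite exprn_ile1.
rewrite -natr1 exprSr.
have : 0 <= (1 - t) * (1 - t ^+ n.+1) by rewrite mulr_ge0 ?subr_ge0.
rewrite exprSr in tn1_le1.
nra.
Qed.

Lemma ler_geometric_slack (R : archiFieldType) (a b c t : R) (N0 : nat) :
  0 <= t < 1 -> (forall N, (N0 <= N)%N -> a <= b + t ^+ N * c) -> a <= b.
Proof.
move=> /andP[t_ge0 t_lt1] slack; rewrite leNgt; apply/negP => ltba.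
pose N := maxn N0 (Num.truncn (`|c| / ((a - b) * (1 - t)))).+1.
have ab_gt0 : 0 < (a - b) * (1 - t) by rewrite mulr_gt0 ?subr_gt0.
have c_lt : `|c| < N%:R * ((a - b) * (1 - t)).
  by rewrite -ltr_pdivrMr // (lt_le_trans (truncnS_gt _)) // ler_nat leq_maxr.
have Nt_ge0 : 0 <= N%:R * (1 - t) by rewrite mulr_ge0 ?subr_ge0 // ltW.
have : (a - b) * (N%:R * (1 - t)) <= t ^+ N * `|c| * (N%:R * (1 - t)).
  rewrite ler_wpM2r // lerBlDl (le_trans (slack N (leq_maxl _ _))) //.
  by rewrite lerD2l ler_wpM2l ?exprn_ge0 // ler_norm.
have : N%:R * (1 - t) * t ^+ N * `|c| <= `|c|.
  by rewrite ler_piMl // natr_mul_expr_le1 // t_ge0 ltW.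
lra.
Qed.

Lemma cone_halfplanes (R : realDomainType) (k x y : R) : 0 <= k ->
  (k * `|y| <= x) = (0 <= x - k * y) && (0 <= x + k * y).
Proof.
move=> k_ge0; have -> : k * `|y| = `|k * y| by rewrite normrM ger0_norm.
by rewrite ler_norml subr_ge0 andbC -[- x <= _]subr_ge0 opprK addrC.
Qed.

Section UnitCircle.
Variable R : rcfType.
Local Notation C := R[i].
Local Notation Re := (@complex.Re R).
Local Notation Im := (@complex.Im R).

Definition poisson_kernel (t : R) (z : C) : R := (1 - t ^+ 2) / (1 - 2 * t * Re z + t ^+ 2).

Lemma Re_realM (r : R) (h : C) : Re (r%:C * h) = r * Re h.
Proof. by case: h => a b /=; simpc. Qed.

Lemma Re_mul (c w : C) : Re (c * w) = Re c * Re w - Im c * Im w.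
Proof. by case: c w => [a b] [x y]. Qed.

Lemma Re_natM (n : nat) (h : C) : Re (n%:R * h) = n%:R * Re h.
Proof. by rewrite -(rmorph_nat (real_complex R)) Re_realM. Qed.

Lemma Re_sum (I : Type) (r : seq I) (P : pred I) (F : I -> C) :
  Re (\sum_(i <- r | P i) F i) = \sum_(i <- r | P i) Re (F i).
Proof. exact: raddf_sum. Qed.

Lemma Re_unit_circle (z : C) : `|z| = 1 -> `|Re z| <= 1.
Proof. by move=> z_unit; rewrite -lecR rmorph1 -z_unit normc_ge_Re. Qed.

Lemma real_complex_eq0 (r : R) : (r%:C == 0 :> C) = (r == 0).
Proof. exact: (inj_eq (@complexI R) r 0). Qed.

Lemma poisson_kernelE (z : C) (t : R) : `|z| = 1 -> 0 < t -> t != 1 ->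
  z / (z - t%:C) - z / (z - (t^-1)%:C) = (poisson_kernel t z)%:C.
Proof.
move=> z_unit t_gt0 t_neq1.
(* On the unit circle z^-1 = z^*, so the denominator is |z - t|^2. *)
have z_neq0 : z != 0 by rewrite -normr_eq0 z_unit oner_neq0.
have zJ : z^* = z^-1 by rewrite invc_norm z_unit expr1n invr1 mul1r.
have den_gt0 := poisson_den_gt0 (Re_unit_circle z_unit) t_gt0 t_neq1.
have denE : (1 - 2 * t * Re z + t ^+ 2)%:C = (z - t%:C) * (z^-1 - t%:C).
  have -> : (1 - 2 * t * Re z + t ^+ 2)%:C = 1 - 2 * t%:C * (Re z)%:C + t%:C ^+ 2.
    by rewrite rmorphD rmorphB rmorph1 !rmorphM rmorph_nat.
  by rewrite ReJ_add zJ; field.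
have : (z - t%:C) * (z^-1 - t%:C) != 0 by rewrite -denE real_complex_eq0 gt_eqF.
rewrite mulf_eq0 negb_or => /andP[zt_neq0 zVt_neq0].
have t_neq0 : t%:C != 0 :> C by rewrite real_complex_eq0 gt_eqF.
have tz_neq1 : t%:C * z != 1.
  by apply: contraNneq zVt_neq0 => tz1; rewrite subr_eq0 -[t%:C](mulfK z_neq0) tz1 mul1r.
have -> : (poisson_kernel t z)%:C = (1 - t%:C ^+ 2) / ((z - t%:C) * (z^-1 - t%:C)).
  by rewrite -denE fmorph_div rmorphB rmorph1 rmorphXn.
rewrite fmorphV; field.
by rewrite z_neq0 zt_neq0 t_neq0 mulNr subr_eq0 eq_sym tz_neq1 mulrC subr_eq0 tz_neq1.
Qed.

Lemma poisson_kernel_ge (z : C) (t : R) : `|z| = 1 -> 0 < t < 1 ->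
  (1 - t) / (1 + t) <= poisson_kernel t z.
Proof. by move=> /Re_unit_circle; apply: poisson_ratio_ge. Qed.

Section OddRootsCircle.
Variables (N : nat) (eta : C).
Hypotheses (N_gt0 : (0 < N)%N) (eta_prim : (2 * N).-primitive_root eta).
Local Notation xi k := (eta ^+ (2 * k).+1).

Lemma norm_odd_root (k : nat) : `|xi k| = 1.
Proof. by rewrite normrX (norm_prim_root _ eta_prim) ?expr1n ?muln_gt0. Qed.

Lemma sum_Re_odd_root (H : {poly C}) :
  (size H <= N)%N -> \sum_(k < N) Re H.[xi k] = N%:R * Re H`_0.
Proof.
by move=> size_H; rewrite -Re_natM -(sum_odd_root_horner N_gt0 eta_prim size_H) raddf_sum.
Qed.

Lemma sum_poisson_odd_root (H : {poly C}) (t : R) : (size H <= N)%N -> 0 < t -> t != 1 ->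
  \sum_(k < N) poisson_kernel t (xi k) * Re H.[xi k] =
  N%:R * ((Re H.[t%:C] - t ^+ N * Re H.[(t^-1)%:C]) / (1 + t ^+ N)).
Proof.
move=> size_H t_gt0 t_neq1.
have real_ok (s : R) : 0 < s -> 1 + s%:C ^+ N != 0.
  move=> s_gt0; rewrite -rmorphXn -(rmorph1 (real_complex R)) -rmorphD.
  by rewrite real_complex_eq0 gt_eqF // ltr_pwDl // exprn_ge0 // ltW.
have cauchyE (s : R) : 0 < s -> \sum_(k < N) xi k * H.[xi k] / (xi k - s%:C) =
    (N%:R / (1 + s ^+ N))%:C * H.[s%:C].
  move=> s_gt0; rewrite sum_odd_root_cauchy ?real_ok ?real_complex_eq0 ?gt_eqF //.
  by rewrite fmorph_div rmorphD rmorph1 rmorphXn rmorph_nat mulrAC.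
have sumE : \sum_(k < N) (poisson_kernel t (xi k))%:C * H.[xi k] =
    (N%:R / (1 + t ^+ N))%:C * H.[t%:C] -
    (N%:R / (1 + t^-1 ^+ N))%:C * H.[(t^-1)%:C].
  rewrite -!cauchyE ?invr_gt0 // -sumrB; apply: eq_bigr => k _.
  rewrite -poisson_kernelE ?norm_odd_root // mulrBl.
  by congr (_ - _); apply: mulrAC.
have tN_gt0 : 0 < t ^+ N by rewrite exprn_gt0.
have tVN : N%:R / (1 + t^-1 ^+ N) = N%:R / (1 + t ^+ N) * t ^+ N.
  by rewrite exprVn; field; rewrite !gt_eqF ?addr_gt0.
have -> : \sum_(k < N) poisson_kernel t (xi k) * Re H.[xi k] =
    Re (\sum_(k < N) (poisson_kernel t (xi k))%:C * H.[xi k]).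
  by rewrite Re_sum; apply: eq_bigr => k _; rewrite Re_realM.
by rewrite sumE raddfB /= !Re_realM tVN; ring.
Qed.
End OddRootsCircle.

Lemma odd_root_exists (N : nat) : (0 < N)%N -> exists eta : C, (2 * N).-primitive_root eta.
Proof. by move=> N_gt0; apply: prim_root_exists; rewrite ?pnatr_eq0 -?lt0n muln_gt0. Qed.

Lemma Re_coef0_ge0 (H : {poly C}) :
  (forall z : C, `|z| = 1 -> 0 <= Re H.[z]) -> 0 <= Re H`_0.
Proof.
move=> H_ge0; have N_gt0 := ltn0Sn (size H).
have [eta eta_prim] := odd_root_exists N_gt0.
rewrite -(pmulr_rge0 _ (ltr0Sn _ (size H))) -(sum_Re_odd_root N_gt0 eta_prim) //.
by apply: sumr_ge0 => k _; apply/H_ge0/(norm_odd_root N_gt0 eta_prim).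
Qed.

Lemma Re_coef0_gt0 (H : {poly C}) :
  (forall z : C, `|z| = 1 -> 0 < Re H.[z]) -> 0 < Re H`_0.
Proof.
move=> H_gt0; have N_gt0 := ltn0Sn (size H).
have [eta eta_prim] := odd_root_exists N_gt0.
rewrite -(pmulr_rgt0 _ (ltr0Sn _ (size H))) -(sum_Re_odd_root N_gt0 eta_prim) //.
have xi_unit := norm_odd_root N_gt0 eta_prim.
rewrite (bigD1 ord0) //= ltr_wpDr ?H_gt0 // sumr_ge0 // => k _.
exact/ltW/H_gt0.
Qed.

Lemma harnack_odd_root (N : nat) (eta : C) (H : {poly C}) (t : R) :
  (0 < N)%N -> (2 * N).-primitive_root eta -> (size H <= N)%N -> 0 < t < 1 ->
  (forall z : C, `|z| = 1 -> 0 <= Re H.[z]) ->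
  (1 - t) / (1 + t) * Re H`_0 <= Re H.[t%:C] - t ^+ N * Re H.[(t^-1)%:C].
Proof.
move=> N_gt0 eta_prim size_H t_itv H_ge0; have /andP[t_gt0 t_lt1] := t_itv.
have : (1 - t) / (1 + t) * (N%:R * Re H`_0) <=
    N%:R * ((Re H.[t%:C] - t ^+ N * Re H.[(t^-1)%:C]) / (1 + t ^+ N)).
  rewrite -(sum_poisson_odd_root N_gt0 eta_prim) ?lt_eqF //.
  rewrite -(sum_Re_odd_root N_gt0 eta_prim) // mulr_sumr; apply: ler_sum => k _.
  have xi_unit := norm_odd_root N_gt0 eta_prim k.
  by apply: ler_wpM2r; [exact: H_ge0 | exact: poisson_kernel_ge].
rewrite mulrCA ler_pM2l ?ltr0n // ler_pdivlMr ?addr_gt0 ?exprn_gt0 //; apply: le_trans.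
have k0_ge0 : 0 <= (1 - t) / (1 + t) by rewrite divr_ge0 //; lra.
by rewrite ler_peMr ?(mulr_ge0 k0_ge0 (Re_coef0_ge0 H_ge0)) // lerDl exprn_ge0 // ltW.
Qed.
End UnitCircle.

Section Disc.
Variable R : realType.
Local Notation C := R[i].
Local Notation Re := (@complex.Re R).

Lemma harnack (H : {poly C}) (t : R) : 0 < t < 1 ->
  (forall z : C, `|z| = 1 -> 0 <= Re H.[z]) -> (1 - t) / (1 + t) * Re H`_0 <= Re H.[t%:C].
Proof.
move=> t_itv H_ge0; have /andP[t_gt0 t_lt1] := t_itv.
apply: (@ler_geometric_slack _ _ _ (- Re H.[(t^-1)%:C]) t (size H).+1) => [|N N_ge].
  by rewrite ltW.
have N_gt0 : (0 < N)%N := leq_trans (ltn0Sn _) N_ge.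
have [eta eta_prim] := odd_root_exists R N_gt0.
by rewrite mulrN; apply: (harnack_odd_root N_gt0 eta_prim) => //; apply: ltnW.
Qed.

Lemma halfplane_horner_ge (Q : {poly C}) (c : C) (d t : R) : 0 < t < 1 ->
  (forall z : C, `|z| = 1 -> d <= Re (c * Q.[z])) -> d <= Re (c * Q.[t%:C]).
Proof.
move=> t_itv Q_ge; have /andP[t_gt0 t_lt1] := t_itv.
pose H := c *: Q - (d%:C)%:P.
have HE x : Re H.[x] = Re (c * Q.[x]) - d by rewrite !hornerE raddfB.
have H_ge0 z : `|z| = 1 -> 0 <= Re H.[z] by move=> /Q_ge; rewrite HE subr_ge0.
rewrite -subr_ge0 -HE (le_trans _ (harnack t_itv H_ge0)) // mulr_ge0 ?Re_coef0_ge0 //.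
by rewrite divr_ge0 //; lra.
Qed.

Lemma halfplane_horner_gt (Q : {poly C}) (c : C) (d t : R) : 0 < t < 1 ->
  (forall z : C, `|z| = 1 -> d < Re (c * Q.[z])) -> d < Re (c * Q.[t%:C]).
Proof.
move=> t_itv Q_gt; have /andP[t_gt0 t_lt1] := t_itv.
pose H := c *: Q - (d%:C)%:P.
have HE x : Re H.[x] = Re (c * Q.[x]) - d by rewrite !hornerE raddfB.
have H_gt0 z : `|z| = 1 -> 0 < Re H.[z] by move=> /Q_gt; rewrite HE subr_gt0.
have H_ge0 z : `|z| = 1 -> 0 <= Re H.[z] by move=> /H_gt0 /ltW.
rewrite -subr_gt0 -HE (lt_le_trans _ (harnack t_itv H_ge0)) // mulr_gt0 ?Re_coef0_gt0 //.
by rewrite divr_gt0 //; lra.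
Qed.
End Disc.

Section Region.
Variable R : realType.
Local Notation C := R[i].
Local Notation Re := (@complex.Re R).
Local Notation Im := (@complex.Im R).
Variables tau0 tau1 tau2 : R.
Hypothesis tau0_ge : 0 <= 1 + tau0.

Lemma regionC_horner_unit (Q : {poly C}) (t : R) : 0 < t < 1 ->
  (forall z : C, `|z| = 1 -> regionC tau0 tau1 tau2 Q.[z]) ->
  regionC tau0 tau1 tau2 Q.[t%:C].
Proof.
move=> t_itv Q_reg.
have Re_tilt (y : R) (w : C) : Re ((1 +i* y) * w) = Re w - y * Im w.
  by rewrite Re_mul /= mul1r.
have tilt_ge (y : R) : (forall z : C, `|z| = 1 -> 0 <= Re Q.[z] - y * Im Q.[z]) ->
    0 <= Re Q.[t%:C] - y * Im Q.[t%:C].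
  by move=> Q_ge; rewrite -Re_tilt; apply: halfplane_horner_ge => // z; rewrite Re_tilt => /Q_ge.
split; last split.
- rewrite cone_halfplanes //; apply/andP; split.
    by apply: tilt_ge => z /Q_reg[]; rewrite cone_halfplanes // => /andP[].
  rewrite -[_ * Im _]opprK -mulNr; apply: tilt_ge => z /Q_reg[].
  by rewrite cone_halfplanes // mulNr opprK => /andP[].
- rewrite -[Q.[_]]mul1r; apply: halfplane_horner_gt => // z /Q_reg[_ []].
  by rewrite mul1r.
- have ReN (w : C) : Re (- w) = - Re w by case: w.
  have := halfplane_horner_gt (Q := Q) (c := -1) (d := - tau2) t_itv.
  by rewrite mulN1r ReN ltrN2; apply=> z /Q_reg[_ [_]]; rewrite mulN1r ReN ltrN2.
Qed.

Lemma regionC_horner (Q : {poly C}) (rho r : R) (w : C) : 0 < r < rho -> `|w| = r%:C ->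
  (forall z : C, `|z| = rho%:C -> regionC tau0 tau1 tau2 Q.[z]) ->
  regionC tau0 tau1 tau2 Q.[w].
Proof.
move=> /andP[r_gt0 r_lt_rho] w_norm Q_reg.
have rho_gt0 := lt_trans r_gt0 r_lt_rho.
pose lam := (rho / r)%:C * w.
have lam_norm x : `|x| = 1 -> `|lam * x| = rho%:C.
  move=> x_unit; rewrite !normrM x_unit mulr1 w_norm ger0_norm ?ler0c ?divr_ge0 ?ltW //.
  by rewrite -rmorphM divfK ?gt_eqF.
have -> : w = lam * (r / rho)%:C.
  by rewrite /lam mulrAC -rmorphM mulrA divfK ?mulfV ?gt_eqF ?rmorph1 ?mul1r.
have compE x : (Q \Po (lam *: 'X)).[x] = Q.[lam * x] by rewrite horner_comp hornerZ hornerX.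
rewrite -compE; apply: regionC_horner_unit => [|z /lam_norm /Q_reg]; last by rewrite compE.
by rewrite divr_gt0 // ltr_pdivrMr // mul1r.
Qed.
End Region.

Definition rev_p_a (R : realType) (n : nat) (a : 'I_n -> R) : {poly R[i]} :=
  1 + \sum_(i < n) (a i)%:C *: 'X^(i.+1).

Lemma p_a_div_exprn (R : realType) (n : nat) (a : 'I_n -> R) (z : R[i]) : z != 0 ->
  p_a a z / z ^+ n = (rev_p_a a).[z^-1].
Proof.
move=> z_neq0.
rewrite /p_a /rev_p_a hornerD hornerC horner_sum mulrDl divff ?expf_neq0 //.
congr (1 + _); rewrite mulr_suml; apply: eq_bigr => i _.
rewrite hornerZ hornerXn -mulrA; congr (_ * _).
have -> : z ^+ n = z ^+ (n - i.+1) * z ^+ i.+1 by rewrite -exprD subnK.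
by rewrite invfM mulrA mulfV ?expf_neq0 ?mul1r ?exprVn.
Qed.

Theorem lemma4p3 (R : realType) (tau0 tau1 tau2 : R) (n : nat) (alpha beta : R) :
  0 < tau0 -> 0 < tau1 -> 0 < tau2 -> 0 < alpha -> alpha < beta ->
  forall a : 'I_n -> R,
    B_alpha tau0 tau1 tau2 alpha a -> B_alpha tau0 tau1 tau2 beta a.
Proof.
move=> tau0_gt0 _ _ alpha_gt0 alpha_lt_beta a a_in z z_norm.
have beta_gt0 := lt_trans alpha_gt0 alpha_lt_beta.
have norm_neq0 (u : R[i]) (s : R) : `|u| = s%:C -> 0 < s -> u != 0.
  by move=> u_norm s_gt0; rewrite -normr_eq0 u_norm real_complex_eq0 gt_eqF.
have tau0_ge : 0 <= 1 + tau0 by lra.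
rewrite p_a_div_exprn ?(norm_neq0 _ _ z_norm) //.
apply: (regionC_horner tau0_ge (rho := alpha^-1) (r := beta^-1)) => [||u u_norm].
- by rewrite invr_gt0 beta_gt0 ltf_pV2.
- by rewrite normfV z_norm fmorphV.
have u_neq0 : u != 0 by rewrite (norm_neq0 _ _ u_norm) ?invr_gt0.
rewrite -[u]invrK -p_a_div_exprn ?invr_eq0 //; apply: a_in.
by rewrite normfV u_norm fmorphV invrK.
Qed.
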